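(* For the hop-constrained minimum spanning tree problem (HMSTP), i.e. the HSTP with $R=V$, the partial-ordering model (P-HSTP) is strictly stronger than the assignment model (A-HSTP): for every HMSTP instance $\nu_{\text{P-HSTP}}\ge\nu_{\text{A-HSTP}}$, and there exist HMSTP instances for which this inequality is strict.
   Context: HMSTP instance: a complete undirected graph $G=(V,E)$ with edge costs $c:E\to\mathbb{R}_{>0}$, a root $r\in V$, a hop limit $H\ge1$, and terminal set $R=V$. For every ordered pair $(u,v)$ of distinct nodes there is a variable $x_{u,v}$. Common $x$-constraints: (X1) $\sum_{u\neq v}x_{u,v}\le1$ for all $v\in V$; (X2) $\sum_{u\in V\setminus\{v,w\}}x_{u,v}\ge x_{v,w}$ for all $v\in V\setminus\{r\}$, $w\neq v$; (X3) $0\le x_{u,v}\le1$; (X4) $\sum_{u\neq v}x_{u,v}\ge1$ for all $v\in R\setminus\{r\}$. $\mathcal{P}^{HSTP}$: all $(x,l,g)$ (with $l_{v,i},g_{i,v}$ for $v\in V$, $i=0,\dots,H$) satisfying (X1)–(X4) and $l_{r,0}=g_{0,r}=0$; $l_{v,1}=g_{H,v}=0$ for $v\neq r$; $l_{v,i}\le l_{v,i+1}$ and $g_{i,v}+l_{v,i+1}=1$ for $v\in V$, $i=0,\dots,H-1$; $l_{u,i}+g_{i,v}\ge x_{u,v}$ for $u\neq v$, $i=0,\dots,H$; $0\le l,g\le1$. $\mathcal{A}^{HSTP}$: all $(x,y)$ (with $y_{v,i}$ for $v\in V$, $i=0,\dots,H$) satisfying (X1)–(X4) and $y_{r,0}=1$;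 $y_{r,i}=0$ for $i\ge1$; $y_{v,0}=0$ and $\sum_{i=1}^Hy_{v,i}=1$ for $v\neq r$; $y_{u,i}-y_{v,i+1}+x_{u,v}\le1$ for $u\neq v$, $i=0,\dots,H-1$; $y_{u,H}+x_{u,v}\le1$ for $u\neq v$; $0\le y\le1$. (A-HSTP) and (P-HSTP) minimize $\sum_{uv\in E}c_{uv}(x_{u,v}+x_{v,u})$ over the integral points of $\mathcal{A}^{HSTP}$ and $\mathcal{P}^{HSTP}$ respectively. $\nu_M$ is the optimal value of the LP relaxation of ILP $M$. For a minimization problem, model $A$ is strictly stronger than $B$ if $\nu_A\ge\nu_B$ on all instances and strict inequality holds for some instance. *)

From HB Require Import structures.
From mathcomp Require Import all_boot all_order all_algebra.
From mathcomp Require Import boolp classical_sets reals.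
Set Implicit Arguments. Unset Strict Implicit. Unset Printing Implicit Defensive.
Import Order.TTheory GRing.Theory Num.Theory.
Local Open Scope ring_scope.
Local Open Scope classical_set_scope.

(* An HMSTP instance: V = 'I_n (complete graph), root r, hop limit H >= 1,
   edge costs c u v for the edge {u,v}, read for u < v (values c u v with
   u >= v are irrelevant), required positive. Terminal set R = V. *)
Definition valid_costs (R : realType) (n : nat) (c : 'I_n -> 'I_n -> R) :=
  forall u v : 'I_n, (u < v)%N -> 0 < c u v.

Definition cost (R : realType) (n : nat) (c : 'I_n -> 'I_n -> R)
  (x : 'I_n -> 'I_n -> R) : R :=
  \sum_(u : 'I_n) \sum_(v : 'I_n | (u < v)%N) c u v * (x u v + x v u).

Definition X_constraints (R : realType) (n : nat) (r : 'I_n)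
  (x : 'I_n -> 'I_n -> R) : Prop :=
  [/\ (forall v : 'I_n, \sum_(u : 'I_n | u != v) x u v <= 1),
      (forall v w : 'I_n, v != r -> w != v ->
          x v w <= \sum_(u : 'I_n | (u != v) && (u != w)) x u v),
      (forall u v : 'I_n, u != v -> 0 <= x u v /\ x u v <= 1) &
      (forall v : 'I_n, v != r -> 1 <= \sum_(u : 'I_n | u != v) x u v)].

(* P^HSTP; l v i stands for l_{v,i} and g v i for g_{i,v}, i = 0..H *)
Definition in_P (R : realType) (n : nat) (r : 'I_n) (H : nat)
  (x : 'I_n -> 'I_n -> R) (l g : 'I_n -> nat -> R) : Prop :=
  X_constraints r x /\
  [/\ (l r 0%N = 0 /\ g r 0%N = 0),
      (forall v : 'I_n, v != r -> l v 1%N = 0 /\ g v H = 0),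
      (forall (v : 'I_n) (i : nat), (i < H)%N ->
          l v i <= l v (i.+1)%N /\ g v i + l v (i.+1)%N = 1),
      (forall (u v : 'I_n) (i : nat), u != v -> (i <= H)%N ->
          x u v <= l u i + g v i) &
      (forall (v : 'I_n) (i : nat), (i <= H)%N ->
          [/\ 0 <= l v i, l v i <= 1, 0 <= g v i & g v i <= 1])].

Definition in_A (R : realType) (n : nat) (r : 'I_n) (H : nat)
  (x : 'I_n -> 'I_n -> R) (y : 'I_n -> nat -> R) : Prop :=
  [/\ X_constraints r x,
      (y r 0%N = 1 /\ (forall i : nat, (1 <= i <= H)%N -> y r i = 0)),
      (forall v : 'I_n, v != r ->
          y v 0%N = 0 /\ \sum_(1 <= i < H.+1) y v i = 1),
      ((forall (u v : 'I_n) (i : nat), u != v -> (i < H)%N ->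
          y u i - y v (i.+1)%N + x u v <= 1) /\
       (forall u v : 'I_n, u != v -> y u H + x u v <= 1)) &
      (forall (v : 'I_n) (i : nat), (i <= H)%N -> 0 <= y v i /\ y v i <= 1)].

(* optimal values of the LP relaxations (infimum of the objective over the
   polytope; the polytope is nonempty and compact, so this is the optimum) *)
Definition nu_P (R : realType) (n : nat) (r : 'I_n) (H : nat)
  (c : 'I_n -> 'I_n -> R) : R :=
  inf [set z : R | exists x l g, in_P r H x l g /\ z = cost c x].

Definition nu_A (R : realType) (n : nat) (r : 'I_n) (H : nat)
  (c : 'I_n -> 'I_n -> R) : R :=
  inf [set z : R | exists x y, in_A r H x y /\ z = cost c x].

From HB Require Import structures.
From mathcomp Require Import all_boot all_order all_algebra.
From mathcomp Require Import boolp classical_sets reals.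
From mathcomp Require Import ring lra.
Set Implicit Arguments. Unset Strict Implicit. Unset Printing Implicit Defensive.
Import Order.TTheory GRing.Theory Num.Theory.
Local Open Scope ring_scope.

(* Reading l_{v,i} as the probability that v lies at depth < i, the number
   1 - l_{v,j} caps the mass v may put at depth j.  From a point (x, l, g) of
   the partial-ordering polytope we build depth distributions y_v level by
   level: at level t+1, v receives the least mass allowed by the assignment
   arc constraints from level t, raised if necessary so that the mass still
   missing fits into the caps of the remaining levels.  The arc-forced masses
   of v add up to at most its in-degree sum_u x_{u,v} <= 1 (potential:
   sum_u (x_{u,v} - mass of u above level t)^+), so v never receives more than
   1 in total, and the raising rule makes its total exactly 1 at level H.
   Hence every partial-ordering point projects to an assignment point, and
   nu_A <= nu_P.
   For strictness, on a 4-node instance with H = 2 the assignment relaxation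
   has a fractional point of cost 14/3, while the partial-ordering constraints
   force cost at least 5. *)

Section PositivePart.
Variable R : realDomainType.

Definition pos_part (a : R) : R := Num.max a 0.

Lemma pos_part_ge0 a : 0 <= pos_part a.
Proof. by rewrite /pos_part le_max lexx orbT. Qed.

Lemma pos_part_ge a : a <= pos_part a.
Proof. by rewrite /pos_part le_max lexx. Qed.

Lemma pos_part_id a : 0 <= a -> pos_part a = a.
Proof. by move=> a0; rewrite /pos_part max_l. Qed.

Lemma pos_part_split (a b z : R) : 0 <= b -> a + b <= 1 -> z <= 1 ->
  pos_part (b - 1 + z) + pos_part (z - (a + b)) <= pos_part (z - a).
Proof.
move=> b0 ab z1; rewrite /pos_part.
by case: (leP (b - 1 + z) 0) => ?; case: (leP (z - (a + b)) 0) => ?;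
  case: (leP (z - a) 0) => ?; lra.
Qed.

Lemma max_raise_le (s a g g' b c : R) : s <= Num.max a g -> g + c = g' -> b <= c ->
  s + Num.max b (g' - s) <= Num.max (a + b) g'.
Proof.
move=> hs hg hb; case: (leP a g) hs => ? hs.
  by case: (leP b (g' - s)) => ?; case: (leP (a + b) g') => ?; lra.
by case: (leP b (g' - s)) => ?; case: (leP (a + b) g') => ?; lra.
Qed.

End PositivePart.

Section GreedyDepths.
Variables (R : realType) (n : nat) (r : 'I_n) (H : nat).
Variables (x : 'I_n -> 'I_n -> R) (l : 'I_n -> nat -> R).

Definition depth_cap (v : 'I_n) (j : nat) : R := 1 - l v j.

(* The least total mass v must have received by level t for the remaining
   mass to fit under the caps of levels t+1, ..., H. *)
Definition mass_due (v : 'I_n) (t : nat) : R :=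
  1 - \sum_(t.+1 <= j < H.+1) depth_cap v j.

Definition arc_bound (yt : 'I_n -> R) (v : 'I_n) : R :=
  \big[Num.max/0]_(u | u != v) (yt u - 1 + x u v).

(* The state at level t is the pair (y_{.,t}, sum_{1 <= j <= t} y_{.,j}). *)
Fixpoint greedy_state (t : nat) : ('I_n -> R) * ('I_n -> R) :=
  match t with
  | 0 => (fun v => if v == r then 1 else 0, fun _ => 0)
  | t'.+1 =>
    let yt := fun v => if v == r then 0 else
      Num.max (arc_bound (greedy_state t').1 v)
              (mass_due v t'.+1 - (greedy_state t').2 v) in
    (yt, fun v => (greedy_state t').2 v + yt v)
  end.

Definition greedy_y (v : 'I_n) (t : nat) : R := (greedy_state t).1 v.
Definition mass_upto (v : 'I_n) (t : nat) : R := (greedy_state t).2 v.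
Definition arc_forced (v : 'I_n) (t : nat) : R := arc_bound (greedy_y^~ t) v.
Definition forced_upto (v : 'I_n) (t : nat) : R := \sum_(0 <= j < t) arc_forced v j.
Definition mass_before (u : 'I_n) (t : nat) : R := \sum_(0 <= j < t) greedy_y u j.

Lemma greedy_y0 v : greedy_y v 0 = if v == r then 1 else 0.
Proof. by []. Qed.

Lemma greedy_yS v t : greedy_y v t.+1 =
  if v == r then 0 else Num.max (arc_forced v t) (mass_due v t.+1 - mass_upto v t).
Proof. by []. Qed.

Lemma mass_uptoS v t : mass_upto v t.+1 = mass_upto v t + greedy_y v t.+1.
Proof. by []. Qed.

Lemma mass_upto_sum v t : mass_upto v t = \sum_(1 <= j < t.+1) greedy_y v j.
Proof.
elim: t => [|t IH]; first by rewrite big_geq.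
by rewrite mass_uptoS IH [in RHS]big_nat_recr.
Qed.

Lemma greedy_y_root t : (0 < t)%N -> greedy_y r t = 0.
Proof. by case: t => // t _; rewrite greedy_yS eqxx. Qed.

Lemma greedy_y_ge0 v t : 0 <= greedy_y v t.
Proof.
case: t => [|t]; first by rewrite greedy_y0; case: (v == r).
rewrite greedy_yS; case: (v == r) => //.
by rewrite le_max bigmax_ge_id.
Qed.

Lemma mass_before_root t : mass_before r t.+1 = 1.
Proof.
elim: t => [|t IH]; first by rewrite /mass_before big_nat1 greedy_y0 eqxx.
by rewrite /mass_before big_nat_recr //= -/(mass_before r t.+1) IH greedy_y_root ?addr0.
Qed.

Lemma mass_before_nonroot u t : u != r -> mass_before u t.+1 = mass_upto u t.
Proof.
move=> ur; elim: t => [|t IH].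
  by rewrite /mass_before big_nat1 greedy_y0 (negbTE ur).
by rewrite /mass_before big_nat_recr //= -/(mass_before u t.+1) IH mass_uptoS.
Qed.

Lemma le_arc_bound yt u v : u != v -> yt u - 1 + x u v <= arc_bound yt v.
Proof. by move=> uv; apply: le_bigmax_cond. Qed.

Lemma arc_bound_le_sum yt v :
  arc_bound yt v <= \sum_(u | u != v) pos_part (yt u - 1 + x u v).
Proof.
apply: bigmax_le => [|u uv]; first by apply: sumr_ge0 => u _; apply: pos_part_ge0.
rewrite (bigD1 u) //= -[X in X <= _]addr0.
apply: lerD; first exact: pos_part_ge.
by apply: sumr_ge0 => w _; apply: pos_part_ge0.
Qed.

Lemma greedy_y_arc u v i : v != r -> u != v ->
  greedy_y u i - greedy_y v i.+1 + x u v <= 1.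
Proof.
move=> vr uv; rewrite greedy_yS (negbTE vr).
have := le_arc_bound (greedy_y^~ i) uv.
have : arc_forced v i <= Num.max (arc_forced v i) (mass_due v i.+1 - mass_upto v i).
  by rewrite le_max lexx.
rewrite /arc_forced; lra.
Qed.

Hypothesis H_ge1 : (1 <= H)%N.
Hypothesis l_nonroot1 : forall v, v != r -> l v 1 = 0.
Hypothesis l_bound : forall v i, (i <= H)%N -> 0 <= l v i /\ l v i <= 1.
Hypothesis x_le_l : forall u v i, u != v -> (i < H)%N -> x u v <= l u i + 1 - l v i.+1.
Hypothesis x_bound : forall u v, u != v -> 0 <= x u v /\ x u v <= 1.
Hypothesis indegree_le1 : forall v, \sum_(u | u != v) x u v <= 1.

Lemma arc_forced_pos_part_step v t : (forall u, mass_before u t.+1 <= 1) ->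
  arc_forced v t + \sum_(u | u != v) pos_part (x u v - mass_before u t.+1)
    <= \sum_(u | u != v) pos_part (x u v - mass_before u t).
Proof.
move=> T_le1; apply: le_trans (lerD (arc_bound_le_sum _ v) (lexx _)) _.
rewrite -big_split /=; apply: ler_sum => u uv.
have := T_le1 u; have [_ x1] := x_bound uv.
rewrite /mass_before big_nat_recr //= => Tle1.
exact: pos_part_split (greedy_y_ge0 u t) Tle1 x1.
Qed.

Lemma depth_cap_ge0 v j : (j <= H)%N -> 0 <= depth_cap v j.
Proof. by move=> jH; have [_ ?] := l_bound v jH; rewrite /depth_cap; lra. Qed.

Lemma mass_due_le1 v t : mass_due v t <= 1.
Proof.
rewrite /mass_due gerBl big_nat_cond.
by apply: sumr_ge0 => j /andP[/andP[_ jH] _]; apply: depth_cap_ge0.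
Qed.

Lemma mass_due_H v : mass_due v H = 1.
Proof. by rewrite /mass_due big_geq // subr0. Qed.

Lemma mass_dueS v t : (t < H)%N -> mass_due v t.+1 = mass_due v t + depth_cap v t.+1.
Proof. by move=> tH; rewrite /mass_due (@big_ltn _ _ _ t.+1) //; ring. Qed.

Lemma mass_due0 v : v != r -> mass_due v 0 <= 0.
Proof.
move=> vr; have := mass_dueS v H_ge1; have := mass_due_le1 v 1.
by rewrite /depth_cap l_nonroot1 //; lra.
Qed.

(* The third component is the potential bounding the arc-forced mass. *)
Definition greedy_inv (t : nat) := forall v, v != r ->
  [/\ mass_due v t <= mass_upto v t,
      mass_upto v t <= Num.max (forced_upto v t) (mass_due v t),
      forced_upto v t + \sum_(u | u != v) pos_part (x u v - mass_before u t) <= 1 &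
      (0 < t)%N -> greedy_y v t <= depth_cap v t].

Lemma greedy_inv0 : greedy_inv 0.
Proof.
move=> v vr; rewrite /forced_upto big_geq //; split => //.
- exact: mass_due0.
- by rewrite le_max lexx.
- rewrite add0r (eq_bigr (x^~ v)) // => u uv.
  by rewrite /mass_before big_geq // subr0 pos_part_id //; case: (x_bound uv).
Qed.

Section InvariantConsequences.
Variable t : nat.
Hypothesis inv_t : greedy_inv t.

Lemma inv_mass_upto_le1 v : v != r -> mass_upto v t <= 1.
Proof.
move=> vr; have [_ hS hpot _] := inv_t vr.
have : 0 <= \sum_(u | u != v) pos_part (x u v - mass_before u t).
  by apply: sumr_ge0 => u _; apply: pos_part_ge0.
have := mass_due_le1 v t; move: hS; rewrite le_max.
by case/orP => ? ? ?; lra.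
Qed.

Lemma inv_mass_before_le1 u : mass_before u t.+1 <= 1.
Proof.
have [->|ur] := eqVneq u r; first by rewrite mass_before_root.
by rewrite mass_before_nonroot //; apply: inv_mass_upto_le1.
Qed.

(* The arc constraint of P at level t transfers the cap of u at depth t
   to the cap of v at depth t+1. *)
Lemma inv_arc_forced_le_cap v : (t < H)%N -> v != r ->
  arc_forced v t <= depth_cap v t.+1.
Proof.
move=> tH vr; apply: bigmax_le => [|u uv]; first exact: depth_cap_ge0.
have [_ x1] := x_bound uv.
have [t0|t0] := posnP t.
  by rewrite t0 greedy_y0 /depth_cap l_nonroot1 //; case: (u == r); lra.
have [eur|ur] := eqVneq u r.
  by rewrite eur greedy_y_root //; have := depth_cap_ge0 v tH; rewrite eur in x1; lra.
have [_ _ _ /(_ t0) hy] := inv_t ur.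
by have := x_le_l uv tH; rewrite /depth_cap in hy *; lra.
Qed.

Lemma greedy_invS : (t < H)%N -> greedy_inv t.+1.
Proof.
move=> tH v vr; have [hdue hS hpot _] := inv_t vr.
have hcap := inv_arc_forced_le_cap tH vr.
have hdueS := mass_dueS v tH.
have hy : greedy_y v t.+1 = Num.max (arc_forced v t) (mass_due v t.+1 - mass_upto v t).
  by rewrite greedy_yS (negbTE vr).
have hSS : mass_upto v t.+1 = mass_upto v t + greedy_y v t.+1 by [].
have hFS : forced_upto v t.+1 = forced_upto v t + arc_forced v t.
  by rewrite /forced_upto big_nat_recr.
have hpotS := arc_forced_pos_part_step v inv_mass_before_le1.
have hraise : mass_due v t.+1 - mass_upto v t <= greedy_y v t.+1.
  by rewrite hy le_max lexx orbT.
split.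
- by move: hraise; rewrite hSS; lra.
- by rewrite hSS hy hFS; apply: (max_raise_le hS _ hcap); rewrite hdueS.
- by move: hpotS; rewrite hFS; lra.
- by move=> _; rewrite hy ge_max hcap /=; lra.
Qed.

End InvariantConsequences.

Lemma greedy_inv_all t : (t <= H)%N -> greedy_inv t.
Proof.
elim: t => [|t IH] tH; first exact: greedy_inv0.
exact: greedy_invS (IH (ltnW tH)) tH.
Qed.

Lemma mass_upto_H v : v != r -> mass_upto v H = 1.
Proof.
move=> vr; have inv := greedy_inv_all (leqnn H).
have [hdue _ _ _] := inv v vr; rewrite mass_due_H in hdue.
by apply/eqP; rewrite eq_le hdue inv_mass_upto_le1.
Qed.

Lemma greedy_y_le_cap v t : v != r -> (0 < t)%N -> (t <= H)%N ->
  greedy_y v t <= depth_cap v t.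
Proof. by move=> vr t0 tH; have [_ _ _] := greedy_inv_all tH vr; apply. Qed.

Lemma greedy_y_le1 v t : (t <= H)%N -> greedy_y v t <= 1.
Proof.
move=> tH; have [t0|t0] := posnP t; first by rewrite t0 greedy_y0; case: (v == r).
have [->|vr] := eqVneq v r; first by rewrite greedy_y_root.
have := greedy_y_le_cap vr t0 tH; have [? _] := l_bound v tH; rewrite /depth_cap; lra.
Qed.

End GreedyDepths.

Section PartialOrderingToAssignment.
Variables (R : realType) (n : nat) (r : 'I_n) (H : nat).
Variables (x : 'I_n -> 'I_n -> R) (l g : 'I_n -> nat -> R).
Hypothesis H_ge1 : (1 <= H)%N.
Hypothesis xlg_in_P : in_P r H x l g.

Lemma in_P_l_nonroot1 v : v != r -> l v 1 = 0.
Proof. by case: xlg_in_P => _ [_ /(_ v) hv _ _ _] /hv[]. Qed.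

Lemma in_P_l_bound v i : (i <= H)%N -> 0 <= l v i /\ l v i <= 1.
Proof. by case: xlg_in_P => _ [_ _ _ _ /(_ v i) hb] /hb[]. Qed.

Lemma in_P_x_le_l u v i : u != v -> (i < H)%N -> x u v <= l u i + 1 - l v i.+1.
Proof.
case: xlg_in_P => _ [_ _ hmono harc _] uv iH.
by have := harc u v i uv (ltnW iH); have [_ <-] := hmono v i iH; lra.
Qed.

Lemma in_P_x_le_lH u v : v != r -> u != v -> x u v <= l u H.
Proof.
case: xlg_in_P => _ [_ hnr _ harc _] vr uv.
by have := harc u v H uv (leqnn H); have [_ ->] := hnr v vr; rewrite addr0.
Qed.

(* Arcs into the root vanish: x_{u,r} <= l_{u,0} + g_{0,r} = l_{u,0} <= l_{u,1} = 0. *)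
Lemma in_P_x_to_root u : u != r -> x u r <= 0.
Proof.
case: xlg_in_P => _ [[_ gr0] _ hmono harc _] ur.
have := harc u r 0%N ur (leq0n H); rewrite gr0 addr0.
by have [+ _] := hmono u 0%N H_ge1; rewrite in_P_l_nonroot1 //; lra.
Qed.

Lemma in_P_x_bound u v : u != v -> 0 <= x u v /\ x u v <= 1.
Proof. by case: xlg_in_P => -[_ _ hx _] _; apply: hx. Qed.

Lemma in_P_indegree_le1 v : \sum_(u | u != v) x u v <= 1.
Proof. by case: xlg_in_P => -[hin _ _ _] _; apply: hin. Qed.

Local Notation y := (greedy_y r H x l).

Lemma greedy_in_A : in_A r H x y.
Proof.
have y_le1 := greedy_y_le1 H_ge1 in_P_l_nonroot1 in_P_l_bound in_P_x_le_l
  in_P_x_bound in_P_indegree_le1.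
have y_le_cap := greedy_y_le_cap H_ge1 in_P_l_nonroot1 in_P_l_bound in_P_x_le_l
  in_P_x_bound in_P_indegree_le1.
have mass_H := mass_upto_H H_ge1 in_P_l_nonroot1 in_P_l_bound in_P_x_le_l
  in_P_x_bound in_P_indegree_le1.
have [X _] := xlg_in_P.
split => //.
- by split=> [|i /andP[i0 _]]; [rewrite greedy_y0 eqxx | rewrite greedy_y_root].
- move=> v vr; split; first by rewrite greedy_y0 (negbTE vr).
  by rewrite -mass_upto_sum mass_H.
- split=> [u v i uv iH|u v uv].
    have [vr|vr] := eqVneq v r; last exact: greedy_y_arc.
    rewrite vr in uv *; rewrite greedy_y_root //.
    by have := in_P_x_to_root uv; have := y_le1 u i (ltnW iH); lra.
  have [ur|ur] := eqVneq u r.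
    by rewrite ur in uv *; rewrite greedy_y_root //; have [_ ?] := in_P_x_bound uv; lra.
  have [vr|vr] := eqVneq v r.
    by rewrite vr in uv *; have := in_P_x_to_root ur; have := y_le1 u H (leqnn H); lra.
  have := y_le_cap u H ur H_ge1 (leqnn H).
  by have := in_P_x_le_lH vr uv; rewrite /depth_cap; lra.
- by move=> v i iH; split; [apply: greedy_y_ge0 | apply: y_le1].
Qed.

End PartialOrderingToAssignment.

Section Star.
Variables (R : realType) (n : nat) (r : 'I_n) (H : nat).
Hypothesis H_ge1 : (1 <= H)%N.

Definition star_x (u v : 'I_n) : R := if (u == r) && (v != r) then 1 else 0.
Definition star_l (v : 'I_n) (i : nat) : R := if (v == r) && (i != 0%N) then 1 else 0.
Definition star_g (v : 'I_n) (i : nat) : R := if (i < H)%N then 1 - star_l v i.+1 else 0.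

Lemma star_l_bound v i : 0 <= star_l v i /\ star_l v i <= 1.
Proof. by rewrite /star_l; case: ifP => _; split => //; lra. Qed.

Lemma star_g_bound v i : 0 <= star_g v i /\ star_g v i <= 1.
Proof.
by rewrite /star_g; case: ifP => _; have := star_l_bound v i.+1; split => //; lra.
Qed.

Lemma star_x_bound u v : 0 <= star_x u v /\ star_x u v <= 1.
Proof. by rewrite /star_x; case: ifP => _; split => //; lra. Qed.

Lemma star_indegree v : \sum_(u | u != v) star_x u v = if v == r then 0 else 1.
Proof.
have [->|vr] := eqVneq v r; first by apply: big1 => u _; rewrite /star_x eqxx andbF.
rewrite (bigD1 r) /=; last by rewrite eq_sym.
rewrite {1}/star_x eqxx vr big1 ?addr0 // => u /andP[_ ur].
by rewrite /star_x (negbTE ur).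
Qed.

Lemma star_in_P : in_P r H star_x star_l star_g.
Proof.
split.
  split.
  - by move=> v; rewrite star_indegree; case: (v == r) => //; lra.
  - move=> v w vr _; rewrite {1}/star_x (negbTE vr) /=.
    by apply: sumr_ge0 => u _; case: (star_x_bound u v).
  - by move=> u v _; apply: star_x_bound.
  - by move=> v vr; rewrite star_indegree (negbTE vr).
split.
- by rewrite /star_g H_ge1 /star_l eqxx /=; split => //; lra.
- by move=> v vr; rewrite /star_l /star_g (negbTE vr) ltnn.
- move=> v i iH; rewrite /star_g iH; split; last by ring.
  by rewrite /star_l; case: (v == r) => //=; case: (i != 0%N) => //; lra.
- move=> u v i uv iH; rewrite /star_x.
  have [ur|ur] /= := eqVneq u r; last first.
    by have := star_l_bound u i; have := star_g_bound v i; lra.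
  have [vr|vr] /= := eqVneq v r.
    by have := star_l_bound u i; have := star_g_bound v i; lra.
  have [i0|i0] := posnP i.
    by rewrite i0 /star_g H_ge1 /star_l (negbTE vr) ur eqxx /=; lra.
  by rewrite /star_l ur eqxx /= -lt0n i0; have := star_g_bound v i; lra.
- by move=> v i _; have [? ?] := star_l_bound v i; have [? ?] := star_g_bound v i.
Qed.

End Star.

Section Relaxations.
Variables (R : realType) (n : nat) (r : 'I_n) (H : nat) (c : 'I_n -> 'I_n -> R).
Hypothesis c_valid : valid_costs c.

Lemma cost_ge0 x : (forall u v, u != v -> 0 <= x u v) -> 0 <= cost c x.
Proof.
move=> x_ge0; apply: sumr_ge0 => u _; apply: sumr_ge0 => v uv.
apply: mulr_ge0; first exact: ltW (c_valid uv).
have vu : v != u by rewrite neq_ltn uv orbT.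
by rewrite addr_ge0 // x_ge0 // eq_sym.
Qed.

Lemma nu_A_le_cost x y : in_A r H x y -> nu_A r H c <= cost c x.
Proof.
move=> xy_in_A; apply: ge_inf; last by exists x, y.
exists 0 => _ [x' [y' [[[_ _ x'_bound _] _ _ _ _] ->]]].
by apply: cost_ge0 => u v /x'_bound[].
Qed.

Lemma le_nu_P b : (1 <= H)%N -> (forall x l g, in_P r H x l g -> b <= cost c x) ->
  b <= nu_P r H c.
Proof.
move=> H_ge1 hb; apply: lb_le_inf => [|_ [x [l [g [xlg_in_P ->]]]]].
  by exists (cost c (star_x R r)), (star_x R r), (star_l R r), (star_g R r H);
    split => //; apply: star_in_P.
exact: hb xlg_in_P.
Qed.

Lemma nu_A_le_nu_P : (1 <= H)%N -> nu_A r H c <= nu_P r H c.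
Proof.
move=> H_ge1; apply: le_nu_P => // x l g xlg_in_P.
exact: nu_A_le_cost (greedy_in_A H_ge1 xlg_in_P).
Qed.

End Relaxations.

Section FourNodeExample.
Variable R : realType.

Let o0 : 'I_4 := @Ordinal 4 0 isT.
Let o1 : 'I_4 := @Ordinal 4 1 isT.
Let o2 : 'I_4 := @Ordinal 4 2 isT.
Let o3 : 'I_4 := @Ordinal 4 3 isT.

Lemma big_ord4_cond (f : 'I_4 -> R) (P : pred 'I_4) : \sum_(i | P i) f i =
  (if P o0 then f o0 else 0) + (if P o1 then f o1 else 0) +
  (if P o2 then f o2 else 0) + (if P o3 then f o3 else 0).
Proof.
rewrite big_mkcond !big_ord_recr big_ord0 /= add0r.
by congr (_ + _ + _ + _); congr (if P _ then f _ else _); apply: val_inj.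
Qed.

Lemma ord4_ind (P : 'I_4 -> Prop) : P o0 -> P o1 -> P o2 -> P o3 -> forall u, P u.
Proof.
move=> P0 P1 P2 P3 [[|[|[|[|m]]]] hm] //.
- by rewrite (_ : Ordinal hm = o0) //; apply: val_inj.
- by rewrite (_ : Ordinal hm = o1) //; apply: val_inj.
- by rewrite (_ : Ordinal hm = o2) //; apply: val_inj.
- by rewrite (_ : Ordinal hm = o3) //; apply: val_inj.
Qed.

(* The default 1 only fills the entries with u >= v, which are not edge costs. *)
Definition ex_cost (u v : 'I_4) : R :=
  match val u, val v with
  | 0, 1 => 3 | 0, 2 => 1 | 0, 3 => 4 | 1, 2 => 1 | 1, 3 => 2 | 2, 3 => 3
  | _, _ => 1 end.

Definition ex_x (u v : 'I_4) : R :=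
  match val u, val v with
  | 0, 2 => 2/3 | 1, 2 => 1/3 | 1, 3 => 2/3 | 2, 1 => 2/3 | 2, 3 => 1/3 | 3, 1 => 1/3
  | _, _ => 0 end.

Definition ex_y (v : 'I_4) (i : nat) : R :=
  match val v, i with
  | 0, 0 => 1 | 1, 1 => 2/3 | 1, 2 => 1/3 | 2, 1 => 2/3 | 2, 2 => 1/3
  | 3, 1 => 1/3 | 3, 2 => 2/3 | _, _ => 0 end.

Lemma ex_cost_valid : valid_costs ex_cost.
Proof. by apply: ord4_ind; apply: ord4_ind => h //; rewrite /ex_cost /=; lra. Qed.

Lemma ex_in_A : in_A o0 2 ex_x ex_y.
Proof.
split.
- split.
  + by apply: ord4_ind; rewrite big_ord4_cond /ex_x /=; lra.
  + by apply: ord4_ind; apply: ord4_ind => h1 h2; rewrite ?eqxx in h1 h2 |- * => //;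
      rewrite big_ord4_cond /ex_x /=; lra.
  + by apply: ord4_ind; apply: ord4_ind => h1; rewrite /ex_x /=; split; lra.
  + by apply: ord4_ind => h1; rewrite ?eqxx in h1 => //;
      rewrite big_ord4_cond /ex_x /=; lra.
- by split => // [[|[|[|i]]]].
- by apply: ord4_ind => h1; rewrite ?eqxx in h1 => //; split => //;
    rewrite big_ltn // big_nat1 /ex_y /=; lra.
- split.
  + by apply: ord4_ind; apply: ord4_ind => -[|[|i]] h1 h2 //; rewrite /ex_x /ex_y /=; lra.
  + by apply: ord4_ind; apply: ord4_ind => h1; rewrite /ex_x /ex_y /=; lra.
- by apply: ord4_ind => -[|[|[|i]]] h //; rewrite /ex_y /=; split; lra.
Qed.

Lemma ex_cost_A : cost ex_cost ex_x = 14/3.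
Proof. by rewrite /cost !big_ord4_cond /ex_cost /ex_x /=; lra. Qed.

Lemma ex_cost_P_ge5 x l g : in_P o0 2 x l g -> 5 <= cost ex_cost x.
Proof.
move=> [[_ _ x_bound indeg] [_ l_nonroot monotone arc _]].
have := indeg o1 isT; have := indeg o2 isT; have := indeg o3 isT.
rewrite !big_ord4_cond /=.
have [? _] := x_bound o0 o1 isT; have [? _] := x_bound o0 o2 isT.
have [? _] := x_bound o0 o3 isT; have [? _] := x_bound o1 o0 isT.
have [? _] := x_bound o1 o2 isT; have [? _] := x_bound o1 o3 isT.
have [? _] := x_bound o2 o0 isT; have [? _] := x_bound o2 o1 isT.
have [? _] := x_bound o2 o3 isT; have [? _] := x_bound o3 o0 isT.
have [? _] := x_bound o3 o1 isT; have [? _] := x_bound o3 o2 isT.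
have := arc o2 o1 1%N isT isT; have := arc o1 o3 2%N isT isT.
have := arc o2 o3 1%N isT isT; have := arc o3 o1 2%N isT isT.
have [? _] := l_nonroot o2 isT; have [_ ?] := l_nonroot o3 isT.
have [_ ?] := l_nonroot o1 isT.
have [_ ?] := monotone o1 1%N isT; have [_ ?] := monotone o3 1%N isT.
by rewrite /cost big_ord4_cond !big_ord4_cond /ex_cost /=; lra.
Qed.

Lemma nu_A_lt_nu_P_ex : nu_A o0 2 ex_cost < nu_P o0 2 ex_cost.
Proof.
have hA : nu_A o0 2 ex_cost <= 14/3.
  by rewrite -ex_cost_A; apply: nu_A_le_cost ex_in_A; apply: ex_cost_valid.
have hP : 5 <= nu_P o0 2 ex_cost by apply: le_nu_P => // x l g /ex_cost_P_ge5.
lra.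
Qed.

End FourNodeExample.

Theorem theorem4 (R : realType) :
  (forall (n : nat) (r : 'I_n) (H : nat) (c : 'I_n -> 'I_n -> R),
      (1 <= H)%N -> valid_costs c ->
      nu_A r H c <= nu_P r H c) /\
  (exists (n : nat) (r : 'I_n) (H : nat) (c : 'I_n -> 'I_n -> R),
      [/\ (1 <= H)%N, valid_costs c & nu_A r H c < nu_P r H c]).
Proof.
split=> [n r H c H_ge1 c_valid | ]; first exact: nu_A_le_nu_P.
exists 4%N, (Ordinal (isT : 0 < 4)%N), 2%N, (@ex_cost R).
by split => //; [apply: ex_cost_valid | apply: nu_A_lt_nu_P_ex].
Qed.
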